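(* Let $(V,\|\cdot\|)$ be a normed plane and let $x,y\in V$ be distinct points such that $[xy]$ is parallel to a nondegenerate segment contained in the unit circle $S$. Let $p$ and $q$ be the centers of the two circles which contain $[xy]$ as a maximal segment, and let $l_p$ and $l_q$ be the lines through $p$ and $q$, respectively, parallel to $\langle xy\rangle$. Then $\mathrm{bis}(x,y)\cap\mathrm{conv}(l_p\cup l_q)$ is a curve from $p$ to $q$ which is homeomorphic to a compact interval.
   Context: A normed (Minkowski) plane $(V,\|\cdot\|)$ is a two-dimensional real vector space with a norm; $S=\{v:\|v\|=1\}$ is its unit circle. For $x,y\in V$, $[xy]$ denotes the closed segment and $\langle xy\rangle$ the line through $x,y$. For distinct $x,y$, $\mathrm{bis}(x,y)=\{z\in V:\|z-x\|=\|z-y\|\}$. A circle with center $c$ and radius $\lambda>0$ is $c+\lambda S$. A maximal segment of a circle is a nondegenerate segment contained in the circle that is not properly contained in any other segment contained in that circle. Fact used in the statement: if $[xy]$ is parallel to a nondegenerate segment of $S$, then there are exactly two circles containing $[xy]$ as a maximal segment, and their centers lie in the two different open half-planes determined by $\langle xy\rangle$. *)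

(* the normed plane is modelled as R*R equipped with an
   arbitrary norm N (every 2-dimensional real normed space is linearly
   isometric to such a model). *)
From Stdlib Require Import Reals.
Open Scope R_scope.

Definition pt := (R * R)%type.
Definition vadd (u v : pt) : pt := (fst u + fst v, snd u + snd v).
Definition vsub (u v : pt) : pt := (fst u - fst v, snd u - snd v).
Definition vscal (t : R) (v : pt) : pt := (t * fst v, t * snd v).
Definition vzero : pt := (0, 0).

Definition is_norm (N : pt -> R) : Prop :=
  (forall v, N v = 0 -> v = vzero) /\
  (forall t v, N (vscal t v) = Rabs t * N v) /\
  (forall u v, N (vadd u v) <= N u + N v).

Definition segment (x y : pt) (z : pt) : Prop :=
  exists t, 0 <= t <= 1 /\ z = vadd (vscal (1 - t) x) (vscal t y).

Definition line_dir (c d : pt) (z : pt) : Prop :=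
  exists t, z = vadd c (vscal t d).

Definition unit_circle (N : pt -> R) (z : pt) : Prop := N z = 1.
Definition circle (N : pt -> R) (c : pt) (lam : R) (z : pt) : Prop :=
  N (vsub z c) = lam.

Definition subset (A B : pt -> Prop) : Prop := forall z, A z -> B z.

Definition parallel (u v : pt) : Prop := fst u * snd v - snd u * fst v = 0.

Definition maximal_segment (C : pt -> Prop) (x y : pt) : Prop :=
  x <> y /\ subset (segment x y) C /\
  forall u v, u <> v -> subset (segment u v) C ->
    subset (segment x y) (segment u v) -> subset (segment u v) (segment x y).

Definition center_of_maximal_circle (N : pt -> R) (x y c : pt) : Prop :=
  exists lam, 0 < lam /\ maximal_segment (circle N c lam) x y.

Definition bis (N : pt -> R) (x y : pt) (z : pt) : Prop :=
  N (vsub z x) = N (vsub z y).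

Definition convex (A : pt -> Prop) : Prop :=
  forall u v t, A u -> A v -> 0 <= t <= 1 ->
    A (vadd (vscal (1 - t) u) (vscal t v)).
Definition conv (A : pt -> Prop) (z : pt) : Prop :=
  forall B, convex B -> subset A B -> B z.

Definition union (A B : pt -> Prop) (z : pt) : Prop := A z \/ B z.
Definition inter (A B : pt -> Prop) (z : pt) : Prop := A z /\ B z.

(* A is a curve from p to q homeomorphic to the compact interval [0,1]:
   there is a homeomorphism f : [0,1] -> A (with inverse g, both continuous
   for the norm topology / relative topologies) with f 0 = p, f 1 = q. *)
Definition arc_from_to (N : pt -> R) (A : pt -> Prop) (p q : pt) : Prop :=
  exists (f : R -> pt) (g : pt -> R),
    (forall t, 0 <= t <= 1 -> A (f t)) /\
    (forall z, A z -> 0 <= g z <= 1) /\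
    (forall t, 0 <= t <= 1 -> g (f t) = t) /\
    (forall z, A z -> f (g z) = z) /\
    (forall t, 0 <= t <= 1 -> forall eps, 0 < eps -> exists delta, 0 < delta /\
       forall s, 0 <= s <= 1 -> Rabs (s - t) < delta -> N (vsub (f s) (f t)) < eps) /\
    (forall z, A z -> forall eps, 0 < eps -> exists delta, 0 < delta /\
       forall w, A w -> N (vsub w z) < delta -> Rabs (g w - g z) < eps) /\
    f 0 = p /\ f 1 = q.

From Stdlib Require Import Reals Lra Psatz ClassicalEpsilon.
Open Scope R_scope.

(* Put d = y - x.  For a centre c of a circle containing [x y] as a maximal segment, the
   convex function t |-> N (c - x + t d) equals the radius exactly on [-1, 0].  In the skew
   coordinates z = p + s (q - p) + t d of the strip conv (l_p ∪ l_q), z lies on bis(x,y) iff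
   the increment h_s t - h_s (t - 1) of the convex function h_s t = N (z - x) vanishes.  This
   increment is nondecreasing and changes sign, so it has a root tau s; the root is unique,
   since two roots would make h_s constant on an interval longer than 1, which the supporting
   lines of the two circles rule out.  The root moves continuously with s, and the inverse of
   s |-> p + s (q - p) + tau s d is a linear functional, bounded by the norm. *)

Ltac pt_ring := unfold vadd, vsub, vscal, vzero; apply injective_projections; simpl; ring.

Lemma Rlt_mult_of_lt_div a b c : 0 < c -> a < b / c -> a * c < b.
Proof.
  intros Hc H. apply (Rmult_lt_compat_r c) in H; [|lra].
  unfold Rdiv in H. rewrite Rmult_assoc, Rinv_l in H by lra. lra.
Qed.

Definition convex_fun (h : R -> R) : Prop :=
  forall u v a, 0 <= a <= 1 -> h ((1 - a) * u + a * v) <= (1 - a) * h u + a * h v.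

Definition constant_on (h : R -> R) (a b m : R) : Prop :=
  forall t, a <= t <= b -> h t = m.

Section ConvexFunctions.

Variable h : R -> R.
Hypothesis h_convex : convex_fun h.

Lemma convex_chord a b c : a < b < c -> (c - a) * h b <= (c - b) * h a + (b - a) * h c.
Proof.
  intros Habc.
  set (al := (b - a) / (c - a)).
  assert (Hal : al * (c - a) = b - a) by (unfold al; field; lra).
  assert (Hb : (1 - al) * a + al * c = b) by nra.
  assert (H := h_convex a c al ltac:(split; nra)).
  rewrite Hb in H.
  assert (E : (c - a) * ((1 - al) * h a + al * h c) = (c - b) * h a + (b - a) * h c).
  { transitivity ((c - a) * h a - (al * (c - a)) * h a + (al * (c - a)) * h c); [ring|].
    rewrite Hal. ring. }
  rewrite <- E. apply Rmult_le_compat_l; lra.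
Qed.

Lemma convex_le_endpoints a b m t : a <= t <= b -> h a <= m -> h b <= m -> h t <= m.
Proof.
  intros Ht Ha Hb.
  destruct (Req_dec t a) as [->|Hta]; auto.
  destruct (Req_dec t b) as [->|Htb]; auto.
  assert (C := convex_chord a t b ltac:(lra)). nra.
Qed.

Lemma constant_on_convex_min a b m : a < b -> constant_on h a b m -> forall t, m <= h t.
Proof.
  intros Hab Hc t.
  destruct (Rlt_le_dec b t) as [Hbt|Hbt].
  - assert (C := convex_chord a b t ltac:(lra)).
    rewrite (Hc a), (Hc b) in C by lra. nra.
  - destruct (Rlt_le_dec t a) as [Hta|Hta].
    + assert (C := convex_chord t a b ltac:(lra)).
      rewrite (Hc a), (Hc b) in C by lra. nra.
    + rewrite Hc by lra. lra.
Qed.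

Lemma constant_on_extend a b m u : a < b -> constant_on h a b m -> h u = m ->
  constant_on h (Rmin u a) (Rmax u b) m.
Proof.
  intros Hab Hc Hu t Ht.
  apply Rle_antisym; [|exact (constant_on_convex_min a b m Hab Hc t)].
  apply (convex_le_endpoints (Rmin u a) (Rmax u b)); auto.
  - unfold Rmin; destruct (Rle_dec u a); [lra|rewrite Hc; lra].
  - unfold Rmax; destruct (Rle_dec u b); [rewrite Hc; lra|lra].
Qed.

Lemma convex_increment_mono t t' : t <= t' -> h t - h (t - 1) <= h t' - h (t' - 1).
Proof.
  intros Ht.
  destruct (Req_dec t t') as [->|Hne]; [lra|].
  assert (C1 := convex_chord (t - 1) t t' ltac:(lra)).
  assert (C2 := convex_chord (t - 1) (t' - 1) t' ltac:(lra)).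
  nra.
Qed.

Lemma convex_increment_roots_constant t1 t2 : t1 < t2 ->
  h t1 = h (t1 - 1) -> h t2 = h (t2 - 1) -> constant_on h (t1 - 1) t2 (h t1).
Proof.
  intros H12 E1 E2 t Ht.
  assert (C1 := convex_chord (t1 - 1) t1 t2 ltac:(lra)).
  assert (C2 := convex_chord (t1 - 1) (t2 - 1) t2 ltac:(lra)).
  assert (E : h t2 = h t1) by nra.
  apply Rle_antisym.
  - apply (convex_le_endpoints (t1 - 1) t2); auto; lra.
  - destruct (Rlt_le_dec t t1) as [Hl|Hl].
    + assert (C := convex_chord t t1 t2 ltac:(lra)). nra.
    + destruct (Req_dec t t1) as [->|Hne]; [lra|].
      assert (C := convex_chord (t1 - 1) t1 t ltac:(lra)). nra.
Qed.

Lemma convex_increment_has_root c K : continuity h -> 0 < c ->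
  (forall t, c * Rabs t - K <= h t) -> exists t, h t - h (t - 1) = 0.
Proof.
  intros Hcont Hc Hlow.
  set (T := Rabs ((K + h 0) / c) + 2).
  assert (HT : K + h 0 < c * T).
  { assert (E : c * ((K + h 0) / c) = K + h 0) by (field; lra).
    assert (A := Rle_abs ((K + h 0) / c)). unfold T. nra. }
  assert (HT1 : 1 < T) by (unfold T; pose proof (Rabs_pos ((K + h 0) / c)); lra).
  assert (Pos : 0 < h T - h (T - 1)).
  { assert (C := convex_chord 0 (T - 1) T ltac:(lra)).
    assert (L := Hlow T). rewrite Rabs_pos_eq in L by lra. nra. }
  assert (Neg : h (- T) - h (- T - 1) < 0).
  { assert (C := convex_chord (- T - 1) (- T) 0 ltac:(lra)).
    assert (L := Hlow (- T)). rewrite Rabs_left in L by lra. nra. }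
  assert (Hinc : continuity (fun t => h t - h (t - 1))).
  { intro t. apply (continuity_pt_minus h (fun t => h (t - 1))); [apply Hcont|].
    apply (continuity_pt_comp (fun t => t - 1) h); [|apply Hcont]. reg. }
  destruct (IVT _ (- T) T Hinc ltac:(lra) Neg Pos) as [t [_ Ht]].
  exists t. exact Ht.
Qed.

End ConvexFunctions.
Lemma lipschitz_continuity (f : R -> R) K : 0 <= K ->
  (forall u v, Rabs (f u - f v) <= K * Rabs (u - v)) -> continuity f.
Proof.
  intros HK Hf t. unfold continuity_pt, continue_in, limit1_in, limit_in.
  intros eps Heps. exists (eps / (K + 1)).
  split; [apply Rdiv_lt_0_compat; lra|].
  intros u [_ Hu]. simpl in *. unfold R_dist in *.
  assert (Hu' := Rlt_mult_of_lt_div _ _ (K + 1) ltac:(lra) Hu).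
  assert (P := Rabs_pos (u - t)).
  eapply Rle_lt_trans; [apply Hf|]. nra.
Qed.

Definition continuous_on_unit (f : R -> R) : Prop :=
  forall s, 0 <= s <= 1 -> forall eps, 0 < eps -> exists delta, 0 < delta /\
    forall s', 0 <= s' <= 1 -> Rabs (s' - s) < delta -> Rabs (f s' - f s) < eps.

(* An implicit function theorem without derivatives: the root of [F s'] stays within [eps]
   of [tau s] as soon as [F s'] differs from [F s] by less than
   [min (F s (tau s + eps)) (- F s (tau s - eps))]. *)
Lemma monotone_root_continuous (F : R -> R -> R) (tau : R -> R) K : 0 <= K ->
  (forall s t t', t <= t' -> F s t <= F s t') ->
  (forall s s' t, Rabs (F s t - F s' t) <= K * Rabs (s - s')) ->
  (forall s, F s (tau s) = 0) ->
  (forall s, 0 <= s <= 1 -> forall t, F s t = 0 -> t = tau s) ->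
  continuous_on_unit tau.
Proof.
  intros HK Hmon Hlip Hroot Huniq s Hs eps Heps.
  set (Fp := F s (tau s + eps)). set (Fm := F s (tau s - eps)).
  assert (HFp : 0 < Fp).
  { assert (A := Hmon s (tau s) (tau s + eps) ltac:(lra)). rewrite Hroot in A.
    destruct A as [A|A]; auto.
    assert (B := Huniq s Hs _ (eq_sym A)). lra. }
  assert (HFm : Fm < 0).
  { assert (A := Hmon s (tau s - eps) (tau s) ltac:(lra)). rewrite Hroot in A.
    destruct A as [A|A]; auto.
    assert (B := Huniq s Hs _ A). lra. }
  exists (Rmin Fp (- Fm) / (K + 1)). split.
  { apply Rdiv_lt_0_compat; [apply Rmin_glb_lt|]; lra. }
  intros s' Hs' Hd.
  assert (Hd' := Rlt_mult_of_lt_div _ _ (K + 1) ltac:(lra) Hd).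
  assert (M1 := Rmin_l Fp (- Fm)). assert (M2 := Rmin_r Fp (- Fm)).
  assert (P := Rabs_pos (s' - s)).
  assert (L1 := Rle_trans _ _ _ (Rle_abs _) (Hlip s s' (tau s + eps))).
  assert (L2 := Rle_trans _ _ _ (Rle_abs _) (Hlip s' s (tau s - eps))).
  rewrite Rabs_minus_sym in L1.
  fold Fp in L1. fold Fm in L2.
  assert (Above : tau s' < tau s + eps).
  { destruct (Rlt_le_dec (tau s') (tau s + eps)) as [H|H]; auto.
    assert (A := Hmon s' _ _ H). rewrite Hroot in A. nra. }
  assert (Below : tau s - eps < tau s').
  { destruct (Rlt_le_dec (tau s - eps) (tau s')) as [H|H]; auto.
    assert (A := Hmon s' _ _ H). rewrite Hroot in A. nra. }
  apply Rabs_def1; lra.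
Qed.

Definition cross (u v : pt) : R := fst u * snd v - snd u * fst v.

Lemma cross_add d u v : cross d (vadd u v) = cross d u + cross d v.
Proof. unfold cross, vadd; simpl; ring. Qed.
Lemma cross_sub d u v : cross d (vsub u v) = cross d u - cross d v.
Proof. unfold cross, vsub; simpl; ring. Qed.
Lemma cross_scal d t v : cross d (vscal t v) = t * cross d v.
Proof. unfold cross, vscal; simpl; ring. Qed.
Lemma cross_line d W t : cross d (vadd W (vscal t d)) = cross d W.
Proof. unfold cross, vadd, vscal; simpl; ring. Qed.

Lemma vsub_neq0 x y : x <> y -> vsub y x <> vzero.
Proof.
  intros H E. apply H. destruct x as [x1 x2], y as [y1 y2].
  unfold vsub, vzero in E; simpl in E. injection E; intros. f_equal; lra.
Qed.

Lemma cross_eq0_collinear d v : d <> vzero -> cross d v = 0 -> exists u, v = vscal u d.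
Proof.
  intros Hd Hk. destruct d as [d1 d2], v as [v1 v2]. unfold cross, vscal in *; simpl in *.
  destruct (Req_dec d1 0) as [H1|H1].
  - assert (H2 : d2 <> 0) by (intro; apply Hd; subst; reflexivity).
    exists (v2 / d2). subst d1.
    assert (Hv1 : v1 = 0) by (apply (Rmult_eq_reg_l d2); lra).
    f_equal; [rewrite Hv1; ring | field; auto].
  - exists (v1 / d1).
    f_equal; [field; auto|]. apply (Rmult_eq_reg_l d1); [|auto]. field_simplify; lra.
Qed.

Lemma vscal_inj_l d a b : d <> vzero -> vscal a d = vscal b d -> a = b.
Proof.
  intros Hd H. destruct d as [d1 d2]. unfold vscal in H; simpl in *.
  injection H; intros H2 H1.
  destruct (Req_dec d1 0) as [->|Hd1].
  - assert (d2 <> 0) by (intro; apply Hd; subst; reflexivity).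
    apply (Rmult_eq_reg_r d2); auto.
  - apply (Rmult_eq_reg_r d1); auto.
Qed.

Lemma line_param_inj x d a b : d <> vzero -> vadd x (vscal a d) = vadd x (vscal b d) -> a = b.
Proof.
  intros Hd H. apply (vscal_inj_l d); auto.
  replace (vscal a d) with (vsub (vadd x (vscal a d)) x) by pt_ring.
  rewrite H. pt_ring.
Qed.

Lemma conv_parallel_lines p q d z :
  conv (union (line_dir p d) (line_dir q d)) z <->
  exists s t, 0 <= s <= 1 /\ z = vadd p (vadd (vscal s (vsub q p)) (vscal t d)).
Proof.
  split.
  - intro H. apply H.
    + intros u v a [s1 [t1 [Hs1 ->]]] [s2 [t2 [Hs2 ->]]] Ha.
      exists ((1 - a) * s1 + a * s2), ((1 - a) * t1 + a * t2). split; [nra|pt_ring].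
    + intros w [[t ->]|[t ->]].
      * exists 0, t. split; [lra|pt_ring].
      * exists 1, t. split; [lra|pt_ring].
  - intros [s [t [Hs ->]]] B HB Hsub.
    replace (vadd p (vadd (vscal s (vsub q p)) (vscal t d))) with
      (vadd (vscal (1 - s) (vadd p (vscal t d))) (vscal s (vadd q (vscal t d)))) by pt_ring.
    apply HB; auto; apply Hsub; [left|right]; exists t; reflexivity.
Qed.

Definition interp (W0 W1 : pt) (s : R) : pt := vadd (vscal (1 - s) W0) (vscal s W1).

Section Norm.

Variable N : pt -> R.
Hypothesis HN : is_norm N.

Lemma norm_scal t v : N (vscal t v) = Rabs t * N v.
Proof. apply HN. Qed.

Lemma norm_triangle u v : N (vadd u v) <= N u + N v.
Proof. apply HN. Qed.

Lemma norm_opp v : N (vscal (-1) v) = N v.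
Proof. rewrite norm_scal, Rabs_left by lra. ring. Qed.

Lemma norm_ge0 v : 0 <= N v.
Proof.
  assert (H := norm_triangle v (vscal (-1) v)).
  replace (vadd v (vscal (-1) v)) with (vscal 0 v) in H by pt_ring.
  rewrite norm_opp, norm_scal, Rabs_R0 in H. lra.
Qed.

Lemma norm_gt0 v : v <> vzero -> 0 < N v.
Proof.
  intro Hv. destruct (norm_ge0 v) as [H|H]; auto.
  exfalso. apply Hv. apply HN. auto.
Qed.

Lemma norm_sub_le a b : Rabs (N a - N b) <= N (vsub a b).
Proof.
  apply Rabs_le.
  assert (H1 := norm_triangle (vsub a b) b).
  replace (vadd (vsub a b) b) with a in H1 by pt_ring.
  assert (H2 := norm_triangle (vscal (-1) (vsub a b)) a).
  replace (vadd (vscal (-1) (vsub a b)) a) with b in H2 by pt_ring.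
  rewrite norm_opp in H2. lra.
Qed.

Lemma norm_line_convex W d : convex_fun (fun t => N (vadd W (vscal t d))).
Proof.
  intros u v a Ha.
  replace (vadd W (vscal ((1 - a) * u + a * v) d)) with
    (vadd (vscal (1 - a) (vadd W (vscal u d))) (vscal a (vadd W (vscal v d)))) by pt_ring.
  eapply Rle_trans; [apply norm_triangle|].
  rewrite !norm_scal, !Rabs_pos_eq by lra. lra.
Qed.

Lemma norm_line_lipschitz W d u v :
  Rabs (N (vadd W (vscal u d)) - N (vadd W (vscal v d))) <= N d * Rabs (u - v).
Proof.
  eapply Rle_trans; [apply norm_sub_le|].
  replace (vsub (vadd W (vscal u d)) (vadd W (vscal v d))) with (vscal (u - v) d) by pt_ring.
  rewrite norm_scal. lra.
Qed.

Lemma norm_line_coercive W d t : N d * Rabs t - N W <= N (vadd W (vscal t d)).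
Proof.
  assert (H := norm_triangle (vadd W (vscal t d)) (vscal (-1) W)).
  replace (vadd (vadd W (vscal t d)) (vscal (-1) W)) with (vscal t d) in H by pt_ring.
  rewrite norm_opp, norm_scal in H. lra.
Qed.

Lemma constant_on_line_cross_neq0 W d a b r : d <> vzero -> a < b ->
  constant_on (fun t => N (vadd W (vscal t d))) a b r -> cross d W <> 0.
Proof.
  intros Hd Hab Hflat Hk.
  destruct (cross_eq0_collinear d W Hd Hk) as [c ->].
  assert (Nd := norm_gt0 d Hd).
  assert (E : forall t, N (vadd (vscal c d) (vscal t d)) = Rabs (c + t) * N d).
  { intro t. rewrite <- norm_scal. f_equal. pt_ring. }
  assert (Ha := Hflat a ltac:(lra)). assert (Hb := Hflat b ltac:(lra)).
  assert (Hm := Hflat ((a + b) / 2) ltac:(lra)).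
  cbv beta in Ha, Hb, Hm. rewrite E in Ha, Hb, Hm.
  assert (A1 : Rabs (c + a) = Rabs (c + b)) by (apply (Rmult_eq_reg_r (N d)); lra).
  assert (A2 : Rabs (c + a) = Rabs (c + (a + b) / 2)) by (apply (Rmult_eq_reg_r (N d)); lra).
  revert A1 A2. unfold Rabs.
  destruct (Rcase_abs (c + a)), (Rcase_abs (c + b)), (Rcase_abs (c + (a + b) / 2)); lra.
Qed.

(* A line on which [N] is constant [= r] along a segment supports the ball of radius [r]. *)
Lemma constant_on_line_support W d a b r : d <> vzero -> a < b ->
  constant_on (fun t => N (vadd W (vscal t d))) a b r ->
  forall v, r * Rabs (cross d v) <= N v * Rabs (cross d W).
Proof.
  intros Hd Hab Hflat v.
  assert (Hmin := constant_on_convex_min _ (norm_line_convex W d) a b r Hab Hflat).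
  assert (HkW := constant_on_line_cross_neq0 W d a b r Hd Hab Hflat).
  destruct (Req_dec (cross d v) 0) as [Hv|Hv].
  - rewrite Hv, Rabs_R0, Rmult_0_r.
    apply Rmult_le_pos; [apply norm_ge0|apply Rabs_pos].
  - set (mu := cross d W / cross d v).
    assert (Hmu : mu * cross d v = cross d W) by (unfold mu; field; auto).
    assert (Hk : cross d (vsub (vscal mu v) W) = 0)
      by (rewrite cross_sub, cross_scal, Hmu; ring).
    destruct (cross_eq0_collinear _ _ Hd Hk) as [u Hu].
    assert (E : vscal mu v = vadd W (vscal u d)) by (rewrite <- Hu; pt_ring).
    assert (H1 := Hmin u). simpl in H1. rewrite <- E, norm_scal in H1.
    assert (H2 : Rabs mu * Rabs (cross d v) = Rabs (cross d W))
      by (rewrite <- Rabs_mult, Hmu; auto).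
    assert (H3 := Rabs_pos_lt _ Hv).
    assert (H4 := norm_ge0 v).
    rewrite <- H2. nra.
Qed.

(* With [W = c - x] and [d = y - x]: the circle of radius [r] about [c] meets the line
   [<x y>] exactly in the segment [[x y]]. *)
Definition level_exactly (W d : pt) (r : R) : Prop :=
  forall u, N (vadd W (vscal u d)) = r <-> -1 <= u <= 0.

Lemma level_exactly_dir_neq0 W d r : level_exactly W d r -> d <> vzero.
Proof.
  intros L ->.
  assert (E : forall u, vadd W (vscal u vzero) = vadd W (vscal 0 vzero)) by (intro; pt_ring).
  assert (H : N (vadd W (vscal 1 vzero)) = r) by (rewrite E; apply L; lra).
  apply L in H. lra.
Qed.

Lemma level_exactly_constant_on W d r : level_exactly W d r ->
  constant_on (fun t => N (vadd W (vscal t d))) (-1) 0 r.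
Proof. intros L u Hu. apply L, Hu. Qed.

Lemma level_exactly_cross_bound W d r : level_exactly W d r ->
  exists K, 0 <= K /\ forall v, Rabs (cross d v) <= K * N v.
Proof.
  intros L.
  assert (Hd := level_exactly_dir_neq0 W d r L).
  assert (Hflat := level_exactly_constant_on W d r L).
  assert (Hk := constant_on_line_cross_neq0 W d (-1) 0 r Hd ltac:(lra) Hflat).
  assert (Hr : 0 < r).
  { rewrite <- (Hflat 0) by lra. apply norm_gt0. intro E. apply Hk.
    rewrite <- (cross_line d W 0), E. unfold cross; simpl; ring. }
  exists (Rabs (cross d W) / r). split.
  - apply Rmult_le_pos; [apply Rabs_pos|left; apply Rinv_0_lt_compat; lra].
  - intro v. apply (Rmult_le_reg_l r); [lra|].
    replace (r * (Rabs (cross d W) / r * N v)) with (N v * Rabs (cross d W)) by (field; lra).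
    exact (constant_on_line_support W d (-1) 0 r Hd ltac:(lra) Hflat v).
Qed.

(* Both lines support their balls, which forces [lam |cross d W| = r |cross d W0|].  Scaling
   by [cross d W0 / cross d W], of modulus at least 1, then maps the flat piece of length
   [b - a > 1] into the [lam]-level set of the line through [W0], which has length 1. *)
Lemma level_exactly_no_long_flat W0 d lam W a b r : level_exactly W0 d lam ->
  constant_on (fun t => N (vadd W (vscal t d))) a b r -> 1 < b - a ->
  Rabs (cross d W) <= Rabs (cross d W0) -> False.
Proof.
  intros L0 Hflat Hlen Hcross.
  assert (Hd := level_exactly_dir_neq0 W0 d lam L0).
  assert (Hflat0 := level_exactly_constant_on W0 d lam L0).
  assert (K0 := constant_on_line_cross_neq0 W0 d (-1) 0 lam Hd ltac:(lra) Hflat0).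
  assert (K := constant_on_line_cross_neq0 W d a b r Hd ltac:(lra) Hflat).
  assert (S0 := constant_on_line_support W0 d (-1) 0 lam Hd ltac:(lra) Hflat0 (vadd W (vscal a d))).
  rewrite cross_line, Hflat in S0 by lra.
  assert (S := constant_on_line_support W d a b r Hd ltac:(lra) Hflat (vadd W0 (vscal 0 d))).
  rewrite cross_line, Hflat0 in S by lra.
  assert (A0 := Rabs_pos_lt _ K0). assert (A := Rabs_pos_lt _ K).
  set (mu := cross d W0 / cross d W).
  assert (Hmu : mu * cross d W = cross d W0) by (unfold mu; field; auto).
  assert (Hmu_abs : Rabs mu * Rabs (cross d W) = Rabs (cross d W0))
    by (rewrite <- Rabs_mult, Hmu; auto).
  assert (Hmu1 : 1 <= Rabs mu) by nra.
  assert (Hlevel : Rabs mu * r = lam).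
  { apply (Rmult_eq_reg_r (Rabs (cross d W))); [|lra]. nra. }
  assert (Image : forall t, a <= t <= b ->
    exists u, vscal mu (vadd W (vscal t d)) = vadd W0 (vscal u d) /\ -1 <= u <= 0).
  { intros t Ht.
    assert (Hk : cross d (vsub (vscal mu (vadd W (vscal t d))) W0) = 0)
      by (rewrite cross_sub, cross_scal, cross_line, Hmu; ring).
    destruct (cross_eq0_collinear _ _ Hd Hk) as [u Hu].
    assert (E : vscal mu (vadd W (vscal t d)) = vadd W0 (vscal u d)) by (rewrite <- Hu; pt_ring).
    exists u. split; auto. apply L0. rewrite <- E, norm_scal, Hflat; auto. }
  destruct (Image a ltac:(lra)) as [ua [Ea Ua]].
  destruct (Image b ltac:(lra)) as [ub [Eb Ub]].
  assert (Hu : mu * (b - a) = ub - ua).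
  { apply (vscal_inj_l d); auto.
    replace (vscal (ub - ua) d) with (vsub (vadd W0 (vscal ub d)) (vadd W0 (vscal ua d))) by pt_ring.
    rewrite <- Ea, <- Eb. pt_ring. }
  assert (Hshort : Rabs (mu * (b - a)) <= 1) by (rewrite Hu; apply Rabs_le; lra).
  rewrite Rabs_mult, (Rabs_pos_eq (b - a)) in Hshort by lra. nra.
Qed.

Lemma level_exactly_parallel_eq W0 W1 d lp lq :
  level_exactly W0 d lp -> level_exactly W1 d lq -> cross d (vsub W1 W0) = 0 -> W1 = W0.
Proof.
  intros L0 L1 Hk.
  assert (Hd := level_exactly_dir_neq0 W0 d lp L0).
  destruct (cross_eq0_collinear _ _ Hd Hk) as [c Hc].
  assert (EW : W1 = vadd W0 (vscal c d)) by (rewrite <- Hc; pt_ring).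
  assert (E : forall u, N (vadd W1 (vscal u d)) = N (vadd W0 (vscal (u + c) d)))
    by (intro u; f_equal; rewrite EW; pt_ring).
  assert (M0 := constant_on_convex_min _ (norm_line_convex W0 d) (-1) 0 lp ltac:(lra)
                  (level_exactly_constant_on W0 d lp L0)).
  assert (M1 := constant_on_convex_min _ (norm_line_convex W1 d) (-1) 0 lq ltac:(lra)
                  (level_exactly_constant_on W1 d lq L1)).
  assert (A1 := M1 (- c)). simpl in A1. rewrite E, Rplus_opp_l, (proj2 (L0 0)) in A1 by lra.
  assert (A2 := M0 (0 + c)). simpl in A2. rewrite <- E, (proj2 (L1 0)) in A2 by lra.
  assert (B1 : N (vadd W0 (vscal (0 + c) d)) = lp)
    by (rewrite <- E; replace lp with lq by lra; apply L1; lra).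
  assert (B2 : N (vadd W0 (vscal (-1 + c) d)) = lp)
    by (rewrite <- E; replace lp with lq by lra; apply L1; lra).
  apply L0 in B1. apply L0 in B2.
  rewrite EW. replace c with 0 by lra. pt_ring.
Qed.

Lemma maximal_segment_level_exactly c lam x y :
  maximal_segment (circle N c lam) x y -> level_exactly (vsub c x) (vsub y x) lam.
Proof.
  intros [Hxy [Hsub Hmax]].
  assert (Hd := vsub_neq0 x y Hxy).
  set (d := vsub y x) in *. set (W := vsub c x).
  assert (Hcirc : forall t, circle N c lam (vadd x (vscal t d)) <-> N (vadd W (vscal (- t) d)) = lam).
  { intro t. unfold circle. rewrite <- norm_opp.
    replace (vscal (-1) (vsub (vadd x (vscal t d)) c)) with (vadd W (vscal (- t) d))
      by (unfold W; pt_ring).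
    tauto. }
  assert (Hline : forall a b t, vadd (vscal (1 - t) (vadd x (vscal a d))) (vscal t (vadd x (vscal b d)))
                                = vadd x (vscal ((1 - t) * a + t * b) d)) by (intros; pt_ring).
  assert (Hxy_line : forall t, vadd (vscal (1 - t) x) (vscal t y) = vadd x (vscal t d))
    by (intro; unfold d; pt_ring).
  assert (Flat : constant_on (fun u => N (vadd W (vscal u d))) (-1) 0 lam).
  { intros u Hu. simpl. replace u with (- - u) by ring. apply Hcirc, Hsub.
    exists (- u). split; [lra|]. symmetry. apply Hxy_line. }
  intro u0. split; [|apply Flat]. intro Hu0.
  assert (Ext := constant_on_extend _ (norm_line_convex W d) (-1) 0 lam u0 ltac:(lra) Flat Hu0).
  set (al := Rmin u0 (-1)) in Ext. set (be := Rmax u0 0) in Ext.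
  assert (Hal : al <= -1 /\ al <= u0) by (split; [apply Rmin_r|apply Rmin_l]).
  assert (Hbe : 0 <= be /\ u0 <= be) by (split; [apply Rmax_r|apply Rmax_l]).
  set (U := vadd x (vscal (- be) d)). set (V := vadd x (vscal (- al) d)).
  assert (HUV : U <> V) by (intro E; apply line_param_inj in E; auto; lra).
  assert (Sub1 : subset (segment U V) (circle N c lam)).
  { intros z [t [Ht ->]]. unfold U, V. rewrite Hline. apply Hcirc, Ext. split; nra. }
  assert (Sub2 : subset (segment x y) (segment U V)).
  { intros z [t [Ht ->]]. set (k := (t + be) / (be - al)).
    assert (Hk : k * (be - al) = t + be) by (unfold k; field; lra).
    exists k. split; [split; nra|].
    rewrite Hxy_line. unfold U, V. rewrite Hline. f_equal. f_equal. nra. }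
  destruct (Hmax U V HUV Sub1 Sub2 U) as [t1 [Ht1 E1]]; [exists 0; split; [lra|pt_ring]|].
  destruct (Hmax U V HUV Sub1 Sub2 V) as [t2 [Ht2 E2]]; [exists 1; split; [lra|pt_ring]|].
  rewrite Hxy_line in E1, E2. unfold U, V in E1, E2.
  apply line_param_inj in E1; auto. apply line_param_inj in E2; auto.
  lra.
Qed.

Lemma skew_path_continuous p e d (tau : R -> R) : continuous_on_unit tau ->
  forall t, 0 <= t <= 1 -> forall eps, 0 < eps -> exists delta, 0 < delta /\
    forall s, 0 <= s <= 1 -> Rabs (s - t) < delta ->
    N (vsub (vadd p (vadd (vscal s e) (vscal (tau s) d)))
            (vadd p (vadd (vscal t e) (vscal (tau t) d)))) < eps.
Proof.
  intros Hcont t Ht eps Heps.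
  assert (Ne := norm_ge0 e). assert (Nd := norm_ge0 d).
  destruct (Hcont t Ht (eps / (2 * (N d + 1)))) as [delta [Hdelta Htau]].
  { apply Rdiv_lt_0_compat; lra. }
  exists (Rmin delta (eps / (2 * (N e + 1)))). split.
  { apply Rmin_glb_lt; auto. apply Rdiv_lt_0_compat; lra. }
  intros s Hs Hst.
  assert (B1 := Rlt_mult_of_lt_div _ _ (2 * (N e + 1)) ltac:(lra)
                  (Rlt_le_trans _ _ _ Hst (Rmin_r _ _))).
  assert (B2 := Rlt_mult_of_lt_div _ _ (2 * (N d + 1)) ltac:(lra)
                  (Htau s Hs (Rlt_le_trans _ _ _ Hst (Rmin_l _ _)))).
  replace (vsub (vadd p (vadd (vscal s e) (vscal (tau s) d)))
                (vadd p (vadd (vscal t e) (vscal (tau t) d))))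
    with (vadd (vscal (s - t) e) (vscal (tau s - tau t) d)) by pt_ring.
  eapply Rle_lt_trans; [apply norm_triangle|]. rewrite !norm_scal.
  assert (P1 := Rabs_pos (s - t)). assert (P2 := Rabs_pos (tau s - tau t)).
  nra.
Qed.

Lemma skew_coordinate_continuous p e d K : cross d e <> 0 -> 0 <= K ->
  (forall v, Rabs (cross d v) <= K * N v) ->
  forall z eps, 0 < eps -> exists delta, 0 < delta /\ forall w, N (vsub w z) < delta ->
    Rabs (cross d (vsub w p) / cross d e - cross d (vsub z p) / cross d e) < eps.
Proof.
  intros He HK Hbound z eps Heps.
  assert (Ae := Rabs_pos_lt _ He).
  exists (eps * Rabs (cross d e) / (K + 1)). split.
  { apply Rdiv_lt_0_compat; [nra|lra]. }
  intros w Hwz.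
  assert (B := Rlt_mult_of_lt_div _ _ (K + 1) ltac:(lra) Hwz).
  assert (C := Hbound (vsub w z)). assert (Nwz := norm_ge0 (vsub w z)).
  replace (cross d (vsub w p) / cross d e - cross d (vsub z p) / cross d e) with
    (cross d (vsub w z) / cross d e) by (rewrite !cross_sub; field; auto).
  unfold Rdiv. rewrite Rabs_mult, Rabs_inv.
  apply (Rmult_lt_reg_r (Rabs (cross d e))); [lra|].
  rewrite Rmult_assoc, Rinv_l by lra. nra.
Qed.

Lemma graph_arc p q d (tau : R -> R) (A : pt -> Prop) K :
  cross d (vsub q p) <> 0 -> 0 <= K -> (forall v, Rabs (cross d v) <= K * N v) ->
  continuous_on_unit tau -> tau 0 = 0 -> tau 1 = 0 ->
  (forall z, A z <->
     exists s, 0 <= s <= 1 /\ z = vadd p (vadd (vscal s (vsub q p)) (vscal (tau s) d))) ->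
  arc_from_to N A p q.
Proof.
  intros He HK Hbound Hcont H0 H1 HA.
  set (e := vsub q p) in *.
  set (f := fun s => vadd p (vadd (vscal s e) (vscal (tau s) d))).
  set (g := fun z => cross d (vsub z p) / cross d e).
  assert (HAf : forall z, A z <-> exists s, 0 <= s <= 1 /\ z = f s) by exact HA.
  assert (gf : forall s, g (f s) = s).
  { intro s. unfold g, f.
    replace (vsub (vadd p (vadd (vscal s e) (vscal (tau s) d))) p) with
      (vadd (vscal s e) (vscal (tau s) d)) by pt_ring.
    rewrite cross_add, !cross_scal. unfold cross at 2. field. auto. }
  exists f, g. split; [|split; [|split; [|split; [|split; [|split]]]]].
  - intros s Hs. apply HAf. exists s. auto.
  - intros z Hz. apply HAf in Hz. destruct Hz as [s [Hs ->]]. rewrite gf. auto.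
  - intros s _. apply gf.
  - intros z Hz. apply HAf in Hz. destruct Hz as [s [Hs ->]]. rewrite gf. reflexivity.
  - exact (skew_path_continuous p e d tau Hcont).
  - intros z _ eps Heps.
    destruct (skew_coordinate_continuous p e d K He HK Hbound z eps Heps) as [delta [Hd Hw]].
    exists delta. split; [exact Hd|]. intros w _ Hwz. exact (Hw w Hwz).
  - split; unfold f; [rewrite H0 | rewrite H1; unfold e]; pt_ring.
Qed.

Section Bisector.

Variables (W0 W1 d : pt) (lp lq : R).
Hypothesis level0 : level_exactly W0 d lp.
Hypothesis level1 : level_exactly W1 d lq.

Definition gap (s t : R) : R :=
  N (vadd (interp W0 W1 s) (vscal t d)) - N (vadd (interp W0 W1 s) (vscal (t - 1) d)).

Lemma gap_mono s t t' : t <= t' -> gap s t <= gap s t'.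
Proof. apply (convex_increment_mono _ (norm_line_convex _ d)). Qed.

Lemma gap_lipschitz s s' t : Rabs (gap s t - gap s' t) <= 2 * N (vsub W1 W0) * Rabs (s - s').
Proof.
  assert (L : forall u, Rabs (N (vadd (interp W0 W1 s) (vscal u d))
                            - N (vadd (interp W0 W1 s') (vscal u d)))
                       <= N (vsub W1 W0) * Rabs (s - s')).
  { intro u. eapply Rle_trans; [apply norm_sub_le|].
    replace (vsub (vadd (interp W0 W1 s) (vscal u d)) (vadd (interp W0 W1 s') (vscal u d)))
      with (vscal (s - s') (vsub W1 W0)) by (unfold interp; pt_ring).
    rewrite norm_scal. lra. }
  assert (A1 := L t). assert (A2 := L (t - 1)).
  unfold gap.
  match goal with |- Rabs (?a - ?b - (?c - ?e)) <= _ =>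
    replace (a - b - (c - e)) with ((a - c) - (b - e)) by ring end.
  eapply Rle_trans; [apply Rabs_triang|]. rewrite Rabs_Ropp. lra.
Qed.

Lemma gap_has_root s : exists t, gap s t = 0.
Proof.
  assert (Hd := level_exactly_dir_neq0 _ _ _ level0).
  apply (convex_increment_has_root _ (norm_line_convex (interp W0 W1 s) d)
           (N d) (N (interp W0 W1 s))).
  - apply (lipschitz_continuity _ (N d) (norm_ge0 d)). apply norm_line_lipschitz.
  - apply norm_gt0, Hd.
  - apply norm_line_coercive.
Qed.

(* Two roots would make [N] constant along a segment of length greater than 1 on a line
   lying between the lines through [W0] and [W1]. *)
Lemma gap_root_unique s t1 t2 : 0 <= s <= 1 -> gap s t1 = 0 -> gap s t2 = 0 -> t1 = t2.
Proof.
  intros Hs.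
  assert (Ordered : forall t1 t2, t1 < t2 -> gap s t1 = 0 -> gap s t2 = 0 -> False).
  { clear t1 t2. intros t1 t2 H12 Z1 Z2. unfold gap in Z1, Z2.
    set (W := interp W0 W1 s) in *.
    assert (Hflat := convex_increment_roots_constant _ (norm_line_convex W d) t1 t2 H12
                       ltac:(lra) ltac:(lra)).
    assert (Hcross : Rabs (cross d W) <= (1 - s) * Rabs (cross d W0) + s * Rabs (cross d W1)).
    { unfold W, interp. rewrite cross_add, !cross_scal.
      eapply Rle_trans; [apply Rabs_triang|].
      rewrite !Rabs_mult, (Rabs_pos_eq s), (Rabs_pos_eq (1 - s)) by lra. lra. }
    destruct (Rle_dec (Rabs (cross d W1)) (Rabs (cross d W0))).
    - apply (level_exactly_no_long_flat W0 d lp W _ _ _ level0 Hflat); [lra|nra].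
    - apply (level_exactly_no_long_flat W1 d lq W _ _ _ level1 Hflat); [lra|nra]. }
  intros Z1 Z2.
  destruct (Rtotal_order t1 t2) as [H|[H|H]]; auto; exfalso.
  - exact (Ordered t1 t2 H Z1 Z2).
  - exact (Ordered t2 t1 H Z2 Z1).
Qed.

Lemma gap_root_function : exists tau : R -> R,
  (forall s, gap s (tau s) = 0) /\
  (forall s, 0 <= s <= 1 -> forall t, gap s t = 0 -> t = tau s) /\
  continuous_on_unit tau.
Proof.
  set (tau := fun s => proj1_sig (constructive_indefinite_description _ (gap_has_root s))).
  assert (Hroot : forall s, gap s (tau s) = 0)
    by (intro s; exact (proj2_sig (constructive_indefinite_description _ (gap_has_root s)))).
  assert (Huniq : forall s, 0 <= s <= 1 -> forall t, gap s t = 0 -> t = tau s)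
    by (intros s Hs t Ht; exact (gap_root_unique s t (tau s) Hs Ht (Hroot s))).
  exists tau. split; [|split]; auto.
  apply (monotone_root_continuous gap tau (2 * N (vsub W1 W0))); auto.
  - pose proof (norm_ge0 (vsub W1 W0)); lra.
  - apply gap_mono.
  - apply gap_lipschitz.
Qed.

Lemma gap_at_0 : gap 0 0 = 0.
Proof.
  unfold gap, interp.
  replace (vadd (vadd (vscal (1 - 0) W0) (vscal 0 W1)) (vscal 0 d)) with (vadd W0 (vscal 0 d))
    by pt_ring.
  replace (vadd (vadd (vscal (1 - 0) W0) (vscal 0 W1)) (vscal (0 - 1) d))
    with (vadd W0 (vscal (-1) d)) by pt_ring.
  rewrite (proj2 (level0 0)), (proj2 (level0 (-1))) by lra. ring.
Qed.

Lemma gap_at_1 : gap 1 0 = 0.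
Proof.
  unfold gap, interp.
  replace (vadd (vadd (vscal (1 - 1) W0) (vscal 1 W1)) (vscal 0 d)) with (vadd W1 (vscal 0 d))
    by pt_ring.
  replace (vadd (vadd (vscal (1 - 1) W0) (vscal 1 W1)) (vscal (0 - 1) d))
    with (vadd W1 (vscal (-1) d)) by pt_ring.
  rewrite (proj2 (level1 0)), (proj2 (level1 (-1))) by lra. ring.
Qed.

End Bisector.

Lemma bis_iff_increment x y p q s t :
  bis N x y (vadd p (vadd (vscal s (vsub q p)) (vscal t (vsub y x)))) <->
  gap (vsub p x) (vsub q x) (vsub y x) s t = 0.
Proof.
  unfold bis, gap, interp.
  replace (vsub (vadd p (vadd (vscal s (vsub q p)) (vscal t (vsub y x)))) x) with
    (vadd (vadd (vscal (1 - s) (vsub p x)) (vscal s (vsub q x))) (vscal t (vsub y x))) by pt_ring.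
  replace (vsub (vadd p (vadd (vscal s (vsub q p)) (vscal t (vsub y x)))) y) with
    (vadd (vadd (vscal (1 - s) (vsub p x)) (vscal s (vsub q x))) (vscal (t - 1) (vsub y x)))
    by pt_ring.
  split; intro; lra.
Qed.

End Norm.

Theorem proposition2p4 (N : pt -> R) (x y p q : pt) :
  is_norm N ->
  x <> y ->
  (exists a b, a <> b /\ subset (segment a b) (unit_circle N) /\
               parallel (vsub b a) (vsub y x)) ->
  p <> q ->
  center_of_maximal_circle N x y p ->
  center_of_maximal_circle N x y q ->
  arc_from_to N
    (inter (bis N x y)
           (conv (union (line_dir p (vsub y x)) (line_dir q (vsub y x)))))
    p q.
Proof.
  intros HN _ _ Hpq [lp [_ Mp]] [lq [_ Mq]].
  assert (Lp := maximal_segment_level_exactly N HN p lp x y Mp).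
  assert (Lq := maximal_segment_level_exactly N HN q lq x y Mq).
  assert (Hskew : cross (vsub y x) (vsub q p) <> 0).
  { intro Hk. apply Hpq.
    assert (E : vsub q x = vsub p x).
    { apply (level_exactly_parallel_eq N HN _ _ _ lp lq Lp Lq).
      rewrite <- Hk. f_equal. pt_ring. }
    replace q with (vadd (vsub q x) x) by pt_ring. rewrite E. pt_ring. }
  destruct (gap_root_function N HN _ _ _ lp lq Lp Lq) as [tau [Hroot [Huniq Hcont]]].
  destruct (level_exactly_cross_bound N HN _ _ _ Lp) as [K [HK Hbound]].
  apply (graph_arc N HN p q (vsub y x) tau _ K Hskew HK Hbound Hcont).
  - symmetry. exact (Huniq 0 ltac:(lra) 0 (gap_at_0 N _ _ _ lp Lp)).
  - symmetry. exact (Huniq 1 ltac:(lra) 0 (gap_at_1 N _ _ _ lq Lq)).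
  - intro z. unfold inter. rewrite conv_parallel_lines. split.
    + intros [Hbis [s [t [Hs ->]]]]. exists s. split; auto.
      apply bis_iff_increment in Hbis. rewrite <- (Huniq s Hs t Hbis). reflexivity.
    + intros [s [Hs ->]]. split.
      * apply bis_iff_increment, Hroot.
      * exists s, (tau s). auto.
Qed.
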